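(* Let $g:[a,b]\to\mathbb R$ be increasing, continuous at $a$ and at $b$, and left-continuous at every point of $(a,b)$. Let $f:[a,b]\to\mathbb R$ be $g$-Lipschitz continuous with Lipschitz constant $H$. If $g^C$ is Lipschitz continuous with Lipschitz constant $H$, then $f^C$ is Lipschitz continuous with Lipschitz constant $H^2$.
   Context: For a function $\varphi:[a,b]\to\mathbb R$ having right limits, $\Delta^+\varphi(t)=\varphi(t^+)-\varphi(t)$, its jump part is $\varphi^B(t)=\sum_{s\in[a,t)}\Delta^+\varphi(s)$ and its continuous part is $\varphi^C=\varphi-\varphi^B$. $f$ is $g$-Lipschitz continuous with constant $H$ if $|f(t)-f(s)|\le H|g(t)-g(s)|$ for all $t,s\in[a,b]$. *)

From Stdlib Require Import Reals Lra List.
Import ListNotations.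
Open Scope R_scope.

Definition right_limit (b : R) (phi : R -> R) (t L : R) : Prop :=
  forall eps, 0 < eps -> exists delta, 0 < delta /\
    forall s, t < s < t + delta -> s <= b -> Rabs (phi s - L) < eps.

(* Unconditional summation of the family (d s)_{s | P s} (possibly uncountable
   index set): S is the limit of the net of finite partial sums. *)
Definition has_sum_on (P : R -> Prop) (d : R -> R) (S : R) : Prop :=
  forall eps, 0 < eps -> exists F0 : list R, Forall P F0 /\
    forall F : list R, NoDup F -> Forall P F -> incl F0 F ->
      Rabs (fold_right Rplus 0 (map d F) - S) < eps.

(* J = phi^B(t) = sum_{s in [a,t)} Delta^+ phi(s), where Delta^+ phi(s) = phi(s^+) - phi(s)
   (the right limits at every s in [a,t) exist and the sum converges). *)
Definition jump_part (a b : R) (phi : R -> R) (t J : R) : Prop :=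
  exists d : R -> R,
    (forall s, a <= s < t -> right_limit b phi s (phi s + d s)) /\
    has_sum_on (fun s => a <= s < t) d J.

Definition lipschitz_on (a b : R) (F : R -> R) (H : R) : Prop :=
  forall t s, a <= t <= b -> a <= s <= b -> Rabs (F t - F s) <= H * Rabs (t - s).

Definition g_lipschitz_on (a b : R) (g f : R -> R) (H : R) : Prop :=
  forall t s, a <= t <= b -> a <= s <= b ->
    Rabs (f t - f s) <= H * Rabs (g t - g s).

(* phi^C = phi - phi^B is Lipschitz on [a,b] with constant H
   (including the existence of the jump part phi^B on [a,b]). *)
Definition cont_part_lipschitz (a b : R) (phi : R -> R) (H : R) : Prop :=
  exists phiB : R -> R,
    (forall t, a <= t <= b -> jump_part a b phi t (phiB t)) /\
    lipschitz_on a b (fun t => phi t - phiB t) H.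

Definition nondecreasing_on (a b : R) (g : R -> R) : Prop :=
  forall s t, a <= s -> s <= t -> t <= b -> g s <= g t.

Definition right_cont_at (a b : R) (g : R -> R) (x : R) : Prop :=
  forall eps, 0 < eps -> exists delta, 0 < delta /\
    forall s, a <= s <= b -> x <= s < x + delta -> Rabs (g s - g x) < eps.

Definition left_cont_at (a b : R) (g : R -> R) (x : R) : Prop :=
  forall eps, 0 < eps -> exists delta, 0 < delta /\
    forall s, a <= s <= b -> x - delta < s <= x -> Rabs (g s - g x) < eps.

(* Since g is nondecreasing, g-Lipschitz continuity reads |f t - f s| <= H (g t - g s) for
   s <= t.  Right limits of f exist because f inherits the Cauchy property of g at u+, and
   letting t -> u+ gives |Δ⁺f(u)| <= H Δ⁺g(u), so the jumps of f are summable.  Removing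
   finitely many jumps L ⊂ [s, t) one at a time, from the leftmost, keeps the inequality:
   |f t - f s - Σ_L Δ⁺f| <= H (g t - g s - Σ_L Δ⁺g).  Passing to the limit over L gives
   |f^C t - f^C s| <= H (g^C t - g^C s) <= H^2 |t - s|. *)

From Stdlib Require Import Reals Lra Lia List Permutation Classical ClassicalEpsilon.
Import ListNotations.
Open Scope R_scope.

Notation lsum d F := (fold_right Rplus 0 (map d F)).

Lemma lsum_app (d : R -> R) (A B : list R) : lsum d (A ++ B) = lsum d A + lsum d B.
Proof. induction A as [|x A IH]; simpl; [|rewrite IH]; lra. Qed.

Lemma lsum_elt (d : R -> R) (A B : list R) (u : R) :
  lsum d (A ++ u :: B) = d u + lsum d (A ++ B).
Proof. rewrite !lsum_app; simpl; ring. Qed.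

Lemma lsum_sub (d1 d2 : R -> R) (F : list R) :
  lsum (fun s => d1 s - d2 s) F = lsum d1 F - lsum d2 F.
Proof. induction F as [|x F IH]; simpl; [|rewrite IH]; lra. Qed.

Lemma lsum_scale (c : R) (d : R -> R) (F : list R) : lsum (fun s => c * d s) F = c * lsum d F.
Proof. induction F as [|x F IH]; simpl; [|rewrite IH]; ring. Qed.

Lemma lsum_le (P : R -> Prop) (d1 d2 : R -> R) (F : list R) :
  (forall s, P s -> d1 s <= d2 s) -> Forall P F -> lsum d1 F <= lsum d2 F.
Proof.
  intros Hle HF; induction HF as [|x F Hx _ IH]; simpl; [lra|].
  specialize (Hle x Hx); lra.
Qed.

Lemma lsum_ext (P : R -> Prop) (d1 d2 : R -> R) (F : list R) :
  (forall s, P s -> d1 s = d2 s) -> Forall P F -> lsum d1 F = lsum d2 F.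
Proof.
  intros He HF; apply Rle_antisym; apply (lsum_le P); auto;
    intros s Hs; rewrite (He s Hs); lra.
Qed.

Lemma lsum_perm (d : R -> R) (F G : list R) : Permutation F G -> lsum d F = lsum d G.
Proof. induction 1; simpl; lra. Qed.

Lemma lsum_filter (d : R -> R) (p : R -> bool) (F : list R) :
  lsum d F = lsum d (filter p F) + lsum d (filter (fun x => negb (p x)) F).
Proof. induction F as [|x F IH]; simpl; [|destruct (p x); simpl; rewrite IH]; lra. Qed.

Lemma lsum_nonneg (d : R -> R) (F : list R) : Forall (fun x => 0 <= d x) F -> 0 <= lsum d F.
Proof. induction 1; simpl; lra. Qed.

Lemma lsum_incl_le (d : R -> R) (F0 F : list R) :
  NoDup F0 -> NoDup F -> incl F0 F -> Forall (fun x => 0 <= d x) F ->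
  lsum d F0 <= lsum d F.
Proof.
  intros HN0 HN Hinc Hd.
  set (p := fun x => if in_dec Req_dec_T x F0 then true else false).
  assert (Hperm : Permutation (filter p F) F0).
  { apply NoDup_Permutation; [now apply NoDup_filter | exact HN0 |].
    intro x; rewrite filter_In; unfold p.
    destruct (in_dec Req_dec_T x F0); split; intuition; discriminate. }
  rewrite (lsum_filter d p F), (lsum_perm d _ _ Hperm).
  assert (0 <= lsum d (filter (fun x => negb (p x)) F)); [|lra].
  apply lsum_nonneg, Forall_forall; intros x Hx; apply filter_In in Hx.
  rewrite Forall_forall in Hd; apply Hd, Hx.
Qed.

Lemma common_refinement (P : R -> Prop) (F1 F2 : list R) :
  Forall P F1 -> Forall P F2 ->
  exists G, NoDup G /\ Forall P G /\ incl F1 G /\ incl F2 G.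
Proof.
  intros H1 H2; exists (nodup Req_dec_T (F1 ++ F2)); repeat split.
  - apply NoDup_nodup.
  - apply Forall_forall; intros x Hx; apply nodup_In, in_app_or in Hx.
    rewrite Forall_forall in H1, H2; destruct Hx; auto.
  - intros x Hx; apply nodup_In, in_or_app; auto.
  - intros x Hx; apply nodup_In, in_or_app; auto.
Qed.

Lemma mul_lt_of_lt_div_abs (K x eps : R) :
  0 < eps -> 0 <= x -> x < eps / (Rabs K + 1) -> K * x < eps.
Proof.
  intros Heps Hx Hlt; pose proof (Rabs_pos K); pose proof (RRle_abs K).
  apply Rmult_lt_compat_r with (r := Rabs K + 1) in Hlt; [|lra].
  unfold Rdiv in Hlt; rewrite Rmult_assoc, Rinv_l in Hlt; nra.
Qed.

Lemma has_sum_ext (P : R -> Prop) (d1 d2 : R -> R) (S : R) :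
  (forall s, P s -> d1 s = d2 s) -> has_sum_on P d1 S -> has_sum_on P d2 S.
Proof.
  intros He Hs eps Heps; destruct (Hs eps Heps) as [F0 [HP0 HF]].
  exists F0; split; [exact HP0|]; intros F HN HP Hi.
  rewrite <- (lsum_ext P d1 d2 F He HP); auto.
Qed.

Lemma has_sum_sub (P : R -> Prop) (d1 d2 : R -> R) (S1 S2 : R) :
  has_sum_on P d1 S1 -> has_sum_on P d2 S2 ->
  has_sum_on P (fun s => d1 s - d2 s) (S1 - S2).
Proof.
  intros H1 H2 eps Heps.
  destruct (H1 (eps / 2)) as [F1 [HP1 HF1]]; [lra|].
  destruct (H2 (eps / 2)) as [F2 [HP2 HF2]]; [lra|].
  exists (F1 ++ F2); split; [now apply Forall_app|]; intros F HN HP Hi.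
  destruct (incl_app_inv _ _ Hi) as [Hi1 Hi2].
  assert (A1 := HF1 F HN HP Hi1).
  assert (A2 := HF2 F HN HP Hi2).
  rewrite lsum_sub; apply Rabs_def2 in A1, A2; apply Rabs_def1; lra.
Qed.

Lemma has_sum_scale (P : R -> Prop) (c : R) (d : R -> R) (S : R) :
  has_sum_on P d S -> has_sum_on P (fun s => c * d s) (c * S).
Proof.
  intros Hs eps Heps.
  assert (Hc : 0 <= Rabs c) by apply Rabs_pos.
  destruct (Hs (eps / (Rabs c + 1))) as [F0 [HP0 HF]].
  { apply Rdiv_lt_0_compat; lra. }
  exists F0; split; [exact HP0|]; intros F HN HP Hi.
  specialize (HF F HN HP Hi).
  rewrite lsum_scale, <- Rmult_minus_distr_l, Rabs_mult.
  apply mul_lt_of_lt_div_abs; auto using Rabs_pos; rewrite Rabs_Rabsolu; exact HF.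
Qed.

Lemma lsum_le_has_sum (P : R -> Prop) (d : R -> R) (S : R) (F : list R) :
  (forall s, P s -> 0 <= d s) -> has_sum_on P d S -> NoDup F -> Forall P F ->
  lsum d F <= S.
Proof.
  intros Hd Hs HN HP; apply Rle_plus_epsilon; intros eps Heps.
  destruct (Hs eps Heps) as [F0 [HP0 HF]].
  destruct (common_refinement P F F0 HP HP0) as [G [HNG [HPG [HFG HF0G]]]].
  specialize (HF G HNG HPG HF0G); apply Rabs_def2 in HF.
  assert (lsum d F <= lsum d G); [|lra].
  apply lsum_incl_le; auto.
  rewrite Forall_forall in HPG |- *; auto.
Qed.

Lemma has_sum_of_bounded_nonneg (P : R -> Prop) (d : R -> R) (K : R) :
  (forall s, P s -> 0 <= d s) ->
  (forall F, NoDup F -> Forall P F -> lsum d F <= K) ->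
  exists S, has_sum_on P d S.
Proof.
  intros Hd HK.
  set (E := fun y => exists F, NoDup F /\ Forall P F /\ y = lsum d F).
  assert (HE : exists y, E y) by (exists 0, []; repeat constructor).
  assert (HEb : bound E) by (exists K; intros y [F [HN [HP ->]]]; auto).
  destruct (completeness E HEb HE) as [S [HSub HSleast]].
  exists S; intros eps Heps.
  assert (exists F, NoDup F /\ Forall P F /\ S - eps < lsum d F) as [F0 [HN0 [HP0 Hgt]]].
  { apply NNPP; intro Hno.
    assert (S <= S - eps); [|lra].
    apply HSleast; intros y [F [HN [HP ->]]].
    apply Rnot_lt_le; intro; apply Hno; eauto. }
  exists F0; split; [exact HP0|]; intros F HN HP Hi.
  assert (lsum d F0 <= lsum d F).
  { apply lsum_incl_le; auto; rewrite Forall_forall in HP |- *; auto. }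
  assert (lsum d F <= S) by (apply HSub; exists F; auto).
  apply Rabs_def1; lra.
Qed.

Lemma has_sum_dominated (P : R -> Prop) (h k : R -> R) (K : R) :
  (forall s, P s -> Rabs (h s) <= k s) -> has_sum_on P k K ->
  exists S, has_sum_on P h S.
Proof.
  intros Hhk Hk.
  assert (Hk0 : forall s, P s -> 0 <= k s)
    by (intros s Hs; specialize (Hhk s Hs); pose proof (Rabs_pos (h s)); lra).
  assert (Hpart : forall sg : R, sg = 1 \/ sg = -1 ->
            exists S, has_sum_on P (fun s => Rmax (sg * h s) 0) S).
  { intros sg Hsg; apply has_sum_of_bounded_nonneg with K.
    - intros s _; apply Rmax_r.
    - intros F HN HP; apply Rle_trans with (lsum k F); [|now apply (lsum_le_has_sum P)].
      apply (lsum_le P); auto; intros s Hs; specialize (Hhk s Hs).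
      apply Rmax_lub; [|auto]. 
      destruct Hsg as [-> | ->]; [| rewrite <- Rabs_Ropp in Hhk];
        pose proof (RRle_abs (h s)); pose proof (RRle_abs (- h s)); lra. }
  destruct (Hpart 1 (or_introl eq_refl)) as [Sp Hp].
  destruct (Hpart (-1) (or_intror eq_refl)) as [Sn Hn].
  exists (Sp - Sn); refine (has_sum_ext P _ _ _ _ (has_sum_sub P _ _ _ _ Hp Hn)).
  intros s _; unfold Rmax; do 2 destruct Rle_dec; lra.
Qed.

Lemma has_sum_diff (P Q : R -> Prop) (d : R -> R) (S S' : R) :
  (forall x, Q x -> P x) -> has_sum_on P d S -> has_sum_on Q d S' ->
  has_sum_on (fun x => P x /\ ~ Q x) d (S - S').
Proof.
  intros HQP HP HQ eps Heps.
  destruct (HP (eps / 2)) as [F1 [HP1 HF1]]; [lra|].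
  destruct (HQ (eps / 2)) as [F2 [HQ2 HF2]]; [lra|].
  set (q := fun x => if excluded_middle_informative (Q x) then true else false).
  assert (Hq : forall x, q x = true <-> Q x)
    by (intro x; unfold q; destruct excluded_middle_informative; intuition; discriminate).
  exists (filter (fun x => negb (q x)) F1); split.
  { rewrite Forall_forall in HP1 |- *; intros x Hx; apply filter_In in Hx as [Hx Hnq].
    split; [auto|]; rewrite <- Hq; destruct (q x); easy. }
  intros F HN HF Hinc.
  assert (HQF1 : Forall Q (filter q F1))
    by (apply Forall_forall; intros x Hx; apply filter_In in Hx; apply Hq, Hx).
  destruct (common_refinement Q _ _ HQF1 HQ2) as [G [HNG [HQG [HG1 HG2]]]].
  rewrite Forall_forall in HF, HQG.
  assert (A1 : Rabs (lsum d (G ++ F) - S) < eps / 2).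
  { apply HF1.
    - apply NoDup_app; auto; intros x HxG HxF; apply (HF x HxF), HQG, HxG.
    - apply Forall_forall; intros x Hx; apply in_app_or in Hx as [Hx|Hx];
        [apply HQP, HQG | apply HF]; auto.
    - intros x Hx; apply in_or_app; destruct (q x) eqn:E.
      + left; apply HG1, filter_In; auto.
      + right; apply Hinc, filter_In; rewrite E; auto. }
  specialize (HF2 G HNG (proj2 (Forall_forall _ _) HQG) HG2).
  rewrite lsum_app in A1; apply Rabs_def2 in A1, HF2; apply Rabs_def1; lra.
Qed.

Lemma has_sum_approx_bound (P : R -> Prop) (d1 d2 : R -> R) (S1 S2 X Y H : R) :
  has_sum_on P d1 S1 -> has_sum_on P d2 S2 ->
  (forall F, NoDup F -> Forall P F -> Rabs (X - lsum d1 F) <= H * (Y - lsum d2 F)) ->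
  Rabs (X - S1) <= H * (Y - S2).
Proof.
  intros H1 H2 HF; apply Rle_plus_epsilon; intros eps Heps.
  assert (HH : 0 <= Rabs H) by apply Rabs_pos.
  set (e := eps / (Rabs H + 1)).
  assert (He : 0 < e) by (apply Rdiv_lt_0_compat; lra).
  destruct (H1 e He) as [F1 [HP1 HF1]], (H2 e He) as [F2 [HP2 HF2]].
  destruct (common_refinement P F1 F2 HP1 HP2) as [G [HNG [HPG [HG1 HG2]]]].
  specialize (HF1 G HNG HPG HG1); specialize (HF2 G HNG HPG HG2); specialize (HF G HNG HPG).
  assert (Hdev : H * (S2 - lsum d2 G) <= Rabs H * e).
  { eapply Rle_trans; [apply RRle_abs|]; rewrite Rabs_mult.
    apply Rmult_le_compat_l; [lra|]; rewrite Rabs_minus_sym; lra. }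
  assert (Heps' : eps = (Rabs H + 1) * e) by (unfold e; field; lra).
  replace (X - S1) with ((X - lsum d1 G) + (lsum d1 G - S1)) by ring.
  eapply Rle_trans; [apply Rabs_triang|]; nra.
Qed.

Lemma right_point (b u d : R) : u < b -> 0 < d -> exists v, u < v < u + d /\ v <= b.
Proof.
  intros Hub Hd; exists (u + Rmin d (b - u) / 2).
  assert (0 < Rmin d (b - u)) by (apply Rmin_glb_lt; lra).
  pose proof (Rmin_l d (b - u)); pose proof (Rmin_r d (b - u)); lra.
Qed.

Lemma right_limit_le (b u L1 L2 d0 : R) (phi psi : R -> R) :
  u < b -> 0 < d0 -> right_limit b phi u L1 -> right_limit b psi u L2 ->
  (forall v, u < v < u + d0 -> v <= b -> phi v <= psi v) -> L1 <= L2.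
Proof.
  intros Hub Hd0 H1 H2 Hle; apply Rle_plus_epsilon; intros eps Heps.
  destruct (H1 (eps / 2)) as [d1 [Hd1 A1]]; [lra|].
  destruct (H2 (eps / 2)) as [d2 [Hd2 A2]]; [lra|].
  destruct (right_point b u (Rmin d0 (Rmin d1 d2))) as [v [Hv Hvb]]; [lra| |].
  { repeat apply Rmin_glb_lt; lra. }
  pose proof (Rmin_l d0 (Rmin d1 d2)); pose proof (Rmin_r d0 (Rmin d1 d2)).
  pose proof (Rmin_l d1 d2); pose proof (Rmin_r d1 d2).
  specialize (A1 v ltac:(lra) Hvb); specialize (A2 v ltac:(lra) Hvb).
  specialize (Hle v ltac:(lra) Hvb); apply Rabs_def2 in A1, A2; lra.
Qed.

Lemma right_limit_unique (b u L1 L2 : R) (phi : R -> R) :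
  u < b -> right_limit b phi u L1 -> right_limit b phi u L2 -> L1 = L2.
Proof.
  intros Hub H1 H2; apply Rle_antisym;
    apply (right_limit_le b u _ _ 1 phi phi); auto; intros; lra.
Qed.

Lemma right_limit_lipschitz_comp (b u L K : R) (phi F : R -> R) :
  (forall x y, Rabs (F x - F y) <= K * Rabs (x - y)) ->
  right_limit b phi u L -> right_limit b (fun v => F (phi v)) u (F L).
Proof.
  intros HF Hl eps Heps.
  assert (HK : 0 <= Rabs K) by apply Rabs_pos.
  destruct (Hl (eps / (Rabs K + 1))) as [d [Hd A]]; [apply Rdiv_lt_0_compat; lra|].
  exists d; split; [exact Hd|]; intros s Hs Hsb; specialize (A s Hs Hsb).
  eapply Rle_lt_trans; [apply HF|].
  apply mul_lt_of_lt_div_abs; auto using Rabs_pos.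
Qed.

Lemma right_limit_abs_le (b u Lphi Lpsi c e k d0 : R) (phi psi : R -> R) :
  u < b -> 0 < d0 -> right_limit b phi u Lphi -> right_limit b psi u Lpsi ->
  (forall v, u < v < u + d0 -> v <= b -> Rabs (c - phi v) <= k * (e - psi v)) ->
  Rabs (c - Lphi) <= k * (e - Lpsi).
Proof.
  intros Hub Hd0 Hphi Hpsi Hle.
  apply (right_limit_le b u _ _ d0 (fun v => Rabs (c - phi v)) (fun v => k * (e - psi v)));
    auto.
  - apply (right_limit_lipschitz_comp b u Lphi 1 phi (fun x => Rabs (c - x))); [|auto].
    intros x y; rewrite Rmult_1_l; eapply Rle_trans; [apply Rabs_triang_inv2|].
    rewrite Rabs_minus_sym; right; f_equal; ring.
  - apply (right_limit_lipschitz_comp b u Lpsi (Rabs k) psi (fun x => k * (e - x))); [|auto].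
    intros x y; rewrite <- Rabs_mult, <- Rabs_Ropp; right; f_equal; ring.
Qed.

Definition right_cauchy (b : R) (phi : R -> R) (u : R) : Prop :=
  forall eps, 0 < eps -> exists delta, 0 < delta /\
    forall v w, u < v < u + delta -> v <= b -> u < w < u + delta -> w <= b ->
      Rabs (phi v - phi w) < eps.

Lemma right_limit_cauchy (b u L : R) (phi : R -> R) :
  right_limit b phi u L -> right_cauchy b phi u.
Proof.
  intros Hl eps Heps; destruct (Hl (eps / 2)) as [d [Hd A]]; [lra|].
  exists d; split; [exact Hd|]; intros v w Hv Hvb Hw Hwb.
  specialize (A v Hv Hvb) as Av; specialize (A w Hw Hwb) as Aw.
  apply Rabs_def2 in Av, Aw; apply Rabs_def1; lra.
Qed.

Lemma right_cauchy_transfer (b u K : R) (f g : R -> R) :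
  (forall v w, u < v <= b -> u < w <= b -> Rabs (f v - f w) <= K * Rabs (g v - g w)) ->
  right_cauchy b g u -> right_cauchy b f u.
Proof.
  intros Hfg Hg eps Heps.
  assert (HK : 0 <= Rabs K) by apply Rabs_pos.
  destruct (Hg (eps / (Rabs K + 1))) as [d [Hd A]]; [apply Rdiv_lt_0_compat; lra|].
  exists d; split; [exact Hd|]; intros v w Hv Hvb Hw Hwb.
  specialize (A v w Hv Hvb Hw Hwb).
  eapply Rle_lt_trans; [apply Hfg; lra|].
  apply mul_lt_of_lt_div_abs; auto using Rabs_pos.
Qed.

Lemma right_sequence_eventually (b u d : R) : u < b -> 0 < d ->
  exists N, forall n, (N <= n)%nat ->
    u < u + (b - u) / (INR n + 1) < u + d /\ u + (b - u) / (INR n + 1) <= b.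
Proof.
  intros Hub Hd; destruct (INR_archimed d (b - u) Hd) as [N HN].
  exists N; intros n Hn; apply le_INR in Hn; pose proof (pos_INR N).
  assert (Hpos : 0 < (b - u) / (INR n + 1)) by (apply Rdiv_lt_0_compat; lra).
  assert (Hsmall : (b - u) / (INR n + 1) < Rmin d (b - u + 1)).
  { apply Rmin_glb_lt; apply Rmult_lt_reg_r with (INR n + 1); try lra;
      unfold Rdiv; rewrite Rmult_assoc, Rinv_l; nra. }
  assert ((b - u) / (INR n + 1) <= b - u).
  { unfold Rdiv; rewrite <- (Rmult_1_r (b - u)) at 2.
    apply Rmult_le_compat_l; [lra|]; rewrite <- Rinv_1; apply Rinv_le_contravar; lra. }
  pose proof (Rmin_l d (b - u + 1)); lra.
Qed.

Lemma right_cauchy_limit (b u : R) (phi : R -> R) :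
  u < b -> right_cauchy b phi u -> exists L, right_limit b phi u L.
Proof.
  intros Hub Hc.
  set (w := fun n : nat => u + (b - u) / (INR n + 1)).
  assert (Hcv : Cauchy_crit (fun n => phi (w n))).
  { intros eps Heps; destruct (Hc eps Heps) as [d [Hd A]].
    destruct (right_sequence_eventually b u d Hub Hd) as [N HN].
    exists N; intros n m Hn Hm; destruct (HN n Hn), (HN m Hm); apply A; auto. }
  destruct (R_complete _ Hcv) as [L HL]; exists L; intros eps Heps.
  destruct (Hc (eps / 2)) as [d [Hd A]]; [lra|].
  destruct (right_sequence_eventually b u d Hub Hd) as [N1 HN1].
  destruct (HL (eps / 2)) as [N2 HN2]; [lra|].
  exists d; split; [exact Hd|]; intros s Hs Hsb.
  set (n := Nat.max N1 N2).
  destruct (HN1 n (Nat.le_max_l _ _)); specialize (HN2 n (Nat.le_max_r _ _)).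
  specialize (A s (w n) Hs Hsb ltac:(auto) ltac:(auto)); unfold R_dist in HN2.
  replace (phi s - L) with ((phi s - phi (w n)) + (phi (w n) - L)) by ring.
  eapply Rle_lt_trans; [apply Rabs_triang|]; lra.
Qed.

Lemma list_min (x : R) (L : list R) :
  exists m, In m (x :: L) /\ forall y, In y (x :: L) -> m <= y.
Proof.
  revert x; induction L as [|z L IH]; intro x.
  - exists x; split; [now left|]; intros y [<-|[]]; lra.
  - destruct (IH z) as [m [Hm Hmin]]; destruct (Rle_dec x m).
    + exists x; split; [now left|]; intros y [<-|Hy]; [lra|]; specialize (Hmin y Hy); lra.
    + exists m; split; [now right|]; intros y [<-|Hy]; [lra|]; auto.
Qed.

Lemma NoDup_leftmost_split (x : R) (L : list R) :
  NoDup (x :: L) -> exists u A B, x :: L = A ++ u :: B /\ NoDup (A ++ B) /\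
    forall y, In y (A ++ B) -> u < y.
Proof.
  intros HN; destruct (list_min x L) as [u [Hu Humin]].
  destruct (in_split _ _ Hu) as [A [B HAB]]; rewrite HAB in HN, Humin.
  exists u, A, B; split; [exact HAB|]; split; [eapply NoDup_remove_1; eauto|].
  intros y Hy; assert (u <= y)
    by (apply Humin; apply in_app_or in Hy; apply in_or_app; simpl; tauto).
  destruct (Req_dec u y) as [<-|]; [exfalso; eapply NoDup_remove_2; eauto | lra].
Qed.

Section JumpBounds.

Variables (a b H : R) (f g df dg : R -> R).
Hypothesis g_nondecreasing : nondecreasing_on a b g.
Hypothesis f_g_lipschitz : g_lipschitz_on a b g f H.
Hypothesis f_jump : forall u, a <= u < b -> right_limit b f u (f u + df u).
Hypothesis g_jump : forall u, a <= u < b -> right_limit b g u (g u + dg u).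

Lemma increment_bound (s t : R) :
  a <= s -> s <= t -> t <= b -> Rabs (f t - f s) <= H * (g t - g s).
Proof.
  intros Has Hst Htb; assert (g s <= g t) by (apply g_nondecreasing; lra).
  rewrite <- (Rabs_right (g t - g s)) by lra; apply f_g_lipschitz; lra.
Qed.

Lemma jump_bound (u : R) : a <= u < b -> Rabs (df u) <= H * dg u.
Proof.
  intros Hu.
  assert (Hlim := right_limit_abs_le b u _ _ (f u) (g u) (- H) (b - u) f g
                    ltac:(lra) ltac:(lra) (f_jump u Hu) (g_jump u Hu)).
  replace (Rabs (df u)) with (Rabs (f u - (f u + df u)))
    by (rewrite <- Rabs_Ropp; f_equal; ring).
  replace (H * dg u) with (- H * (g u - (g u + dg u))) by ring.
  apply Hlim; intros v Hv Hvb; rewrite Rabs_minus_sym.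
  replace (- H * (g u - g v)) with (H * (g v - g u)) by ring.
  apply increment_bound; lra.
Qed.

(* Peel off the leftmost point u of L: [s, u] is bounded directly, [u, t] as the limit
   v -> u+ of the bound on [v, t]. *)
Lemma increment_minus_jumps_bound (L : list R) (s t : R) :
  NoDup L -> a <= s -> s <= t -> t <= b -> (forall x, In x L -> s <= x < t) ->
  Rabs (f t - f s - lsum df L) <= H * (g t - g s - lsum dg L).
Proof.
  revert s; induction L as [L IH]
    using (well_founded_induction (Wf_nat.well_founded_ltof _ (@length R))).
  intros s HN Has Hst Htb HL; destruct L as [|x L0].
  { simpl; rewrite !Rminus_0_r; apply increment_bound; auto. }
  destruct (NoDup_leftmost_split x L0 HN) as [u [A [B [HxL [HNAB Hgt]]]]].
  rewrite HxL in *.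
  assert (HuL := HL u (in_elt _ _ _)).
  assert (HABL : forall y, In y (A ++ B) -> s <= y < t)
    by (intros y Hy; apply HL; apply in_app_or in Hy; apply in_or_app; simpl; tauto).
  destruct (list_min t (A ++ B)) as [m [Hm Hmmin]].
  assert (Hum : u < m) by (destruct Hm as [<-|Hm]; [lra | auto]).
  assert (Hmt : m <= t) by (apply Hmmin; now left).
  assert (Hrest := right_limit_abs_le b u _ _ (f t - lsum df (A ++ B)) (g t - lsum dg (A ++ B))
                     H (m - u) f g ltac:(lra) ltac:(lra) (f_jump u ltac:(lra)) (g_jump u ltac:(lra))).
  rewrite !lsum_elt.
  replace (f t - f s - (df u + lsum df (A ++ B)))
    with ((f u - f s) + (f t - lsum df (A ++ B) - (f u + df u))) by ring.
  eapply Rle_trans; [apply Rabs_triang|].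
  replace (H * (g t - g s - (dg u + lsum dg (A ++ B))))
    with (H * (g u - g s) + H * (g t - lsum dg (A ++ B) - (g u + dg u))) by ring.
  apply Rplus_le_compat; [apply increment_bound; lra|].
  apply Hrest; intros v Hv Hvb.
  replace (f t - lsum df (A ++ B) - f v) with (f t - f v - lsum df (A ++ B)) by ring.
  replace (g t - lsum dg (A ++ B) - g v) with (g t - g v - lsum dg (A ++ B)) by ring.
  apply IH; auto; try lra.
  - unfold Wf_nat.ltof; rewrite !length_app; simpl; lia.
  - intros y Hy; assert (m <= y) by (apply Hmmin; right; auto).
    specialize (HABL y Hy); lra.
Qed.

Lemma jumps_summable (t S : R) :
  t <= b -> has_sum_on (fun s => a <= s < t) dg S ->
  exists Sf, has_sum_on (fun s => a <= s < t) df Sf.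
Proof.
  intros Htb Hg; apply (has_sum_dominated _ df (fun s => H * dg s) (H * S)).
  - intros s Hs; apply jump_bound; lra.
  - now apply has_sum_scale.
Qed.

Variables (fB gB : R -> R).
Hypothesis f_jump_sum : forall t, a <= t <= b -> has_sum_on (fun s => a <= s < t) df (fB t).
Hypothesis g_jump_sum : forall t, a <= t <= b -> has_sum_on (fun s => a <= s < t) dg (gB t).

Lemma continuous_part_increment_bound (s t : R) :
  a <= s -> s <= t -> t <= b ->
  Rabs ((f t - fB t) - (f s - fB s)) <= H * ((g t - gB t) - (g s - gB s)).
Proof.
  intros Has Hst Htb.
  assert (Hsub : forall x, a <= x < s -> a <= x < t) by (intros; lra).
  assert (Hf := has_sum_diff _ _ df _ _ Hsub (f_jump_sum t ltac:(lra)) (f_jump_sum s ltac:(lra))).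
  assert (Hg := has_sum_diff _ _ dg _ _ Hsub (g_jump_sum t ltac:(lra)) (g_jump_sum s ltac:(lra))).
  replace ((f t - fB t) - (f s - fB s)) with ((f t - f s) - (fB t - fB s)) by ring.
  replace ((g t - gB t) - (g s - gB s)) with ((g t - g s) - (gB t - gB s)) by ring.
  apply (has_sum_approx_bound _ df dg _ _ _ _ _ Hf Hg); intros F HN HF.
  apply increment_minus_jumps_bound; auto.
  intros x Hx; rewrite Forall_forall in HF; destruct (HF x Hx) as [Hxt Hxs].
  destruct (Rlt_le_dec x s); [exfalso; apply Hxs|]; lra.
Qed.

End JumpBounds.

Lemma choice_on (P : R -> Prop) (Q : R -> R -> Prop) :
  (forall x, P x -> exists y, Q x y) -> exists h, forall x, P x -> Q x (h x).
Proof.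
  intros HPQ; destruct (choice (fun x y => P x -> Q x y)) as [h Hh].
  - intro x; destruct (excluded_middle_informative (P x)) as [Hx|Hx].
    + destruct (HPQ x Hx) as [y Hy]; exists y; auto.
    + exists 0; tauto.
  - exists h; auto.
Qed.

(* The sequence of jumps in [jump_part] may depend on t; it is determined on [a, t) by
   uniqueness of right limits, so a single one serves for all t. *)
Lemma jump_part_common (a b : R) (phi phiB : R -> R) :
  (forall t, a <= t <= b -> jump_part a b phi t (phiB t)) ->
  exists d, (forall u, a <= u < b -> right_limit b phi u (phi u + d u)) /\
    forall t, a <= t <= b -> has_sum_on (fun s => a <= s < t) d (phiB t).
Proof.
  intros Hjp; destruct (Rle_or_lt a b) as [Hab|Hba].
  - destruct (Hjp b) as [d [Hd _]]; [lra|]; exists d; split; [auto|].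
    intros t Ht; destruct (Hjp t Ht) as [d' [Hd' Hsum]].
    apply (has_sum_ext _ d'); [|exact Hsum]; intros s Hs.
    assert (E := right_limit_unique b s _ _ phi ltac:(lra) (Hd' s Hs) (Hd s ltac:(lra))); lra.
  - exists (fun _ => 0); split; intros; lra.
Qed.

Lemma g_lipschitz_right_jumps (a b H : R) (f g dg : R -> R) :
  g_lipschitz_on a b g f H ->
  (forall u, a <= u < b -> right_limit b g u (g u + dg u)) ->
  exists df, forall u, a <= u < b -> right_limit b f u (f u + df u).
Proof.
  intros Hfg Hg.
  apply (choice_on (fun u => a <= u < b) (fun u y => right_limit b f u (f u + y))); intros u Hu.
  destruct (right_cauchy_limit b u f) as [L HL]; [lra|..].
  - apply (right_cauchy_transfer b u H f g); [intros; apply Hfg; lra|].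
    exact (right_limit_cauchy _ _ _ _ (Hg u Hu)).
  - exists (L - f u); replace (f u + (L - f u)) with L by ring; exact HL.
Qed.

Lemma lipschitz_of_increment_bound (a b H : R) (F G : R -> R) :
  (forall s t, a <= s -> s <= t -> t <= b -> Rabs (F t - F s) <= H * (G t - G s)) ->
  lipschitz_on a b G H -> lipschitz_on a b F (H ^ 2).
Proof.
  intros HFG HG.
  assert (Hle : forall s t, a <= s <= b -> a <= t <= b -> s <= t ->
                Rabs (F t - F s) <= H ^ 2 * Rabs (t - s)).
  { intros s t Hs Ht Hst; destruct (Req_dec s t) as [<-|Hneq].
    { rewrite !Rminus_diag, Rabs_R0; lra. }
    assert (HGts := HG t s Ht Hs); rewrite (Rabs_right (t - s)) in HGts by lra.
    pose proof (Rabs_pos (G t - G s)); pose proof (RRle_abs (G t - G s)).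
    assert (0 <= H) by nra.
    specialize (HFG s t ltac:(lra) Hst ltac:(lra)).
    rewrite (Rabs_right (t - s)) by lra; simpl; nra. }
  intros t s Ht Hs; destruct (Rle_dec s t); [now apply Hle|].
  rewrite Rabs_minus_sym, (Rabs_minus_sym t s); apply Hle; auto; lra.
Qed.

Theorem mainTheorem6 (a b H : R) (g f : R -> R) :
  nondecreasing_on a b g ->
  right_cont_at a b g a ->
  left_cont_at a b g b ->
  (forall x, a < x < b -> left_cont_at a b g x) ->
  g_lipschitz_on a b g f H ->
  cont_part_lipschitz a b g H ->
  cont_part_lipschitz a b f (H ^ 2).
Proof.
  intros Hg_mono _ _ _ Hfg [gB [HgB HgC]].
  destruct (jump_part_common a b g gB HgB) as [dg [Hg_jump Hg_sum]].
  destruct (g_lipschitz_right_jumps a b H f g dg Hfg Hg_jump) as [df Hf_jump].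
  destruct (choice_on (fun t => a <= t <= b) (fun t S => has_sum_on (fun s => a <= s < t) df S))
    as [fB Hf_sum].
  { intros t Ht; apply (jumps_summable a b H f g df dg Hg_mono Hfg Hf_jump Hg_jump t (gB t));
      [lra | auto]. }
  exists fB; split.
  - intros t Ht; exists df; split; [intros s Hs; apply Hf_jump; lra | auto].
  - apply (lipschitz_of_increment_bound a b H _ (fun t => g t - gB t)); [|exact HgC].
    exact (continuous_part_increment_bound a b H f g df dg Hg_mono Hfg Hf_jump Hg_jump
             fB gB Hf_sum Hg_sum).
Qed.
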